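(* Let $n>2$ be an integer, $a\in\mathbb{R}$ with $a\ne0$, and for $c\in\mathbb{R}$ let \[\lambda_\pm(c)=\tfrac12\Bigl(2a-(n-1)c\pm\sqrt{\bigl(2a+(n+1)c\bigr)^2+4n}\Bigr),\qquad \lambda_{\lim}(c)=c-2a.\] Put $\varphi=2\pi/n$, $q=\lfloor n/2\rfloor$ and $c_k=\dfrac{4a^2\cos(k\varphi)(1-\cos(k\varphi))+n}{2(n+1)a(\cos(k\varphi)-1)}$ for $k=1,\dots,q$. If $a>0$, let $c_-$ be the abscissa of the point where $\lambda_-(c)=\lambda_{\lim}(c)$; if $a<0$, let $c_+$ be the abscissa of the point where $\lambda_+(c)=\lambda_{\lim}(c)$. Then all $c_k$, $k=1,\dots,q$, lie in $(-\infty,c_-]$ when $a>0$, and in $[c_+,\infty)$ when $a<0$.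
   Context: $\lambda_\pm(c)$ and $c+2a\cos(k\varphi)$ are the eigenvalues of the $(n+1)\times(n+1)$ symmetric matrix $m_n(a,\pm1,c)$ (rows/columns indexed $0,\dots,n$, $(0,0)$-entry $-nc$, $(0,j)$- and $(j,0)$-entries $\pm1$, lower-right block $\mathrm{circ}(c,a,0,\dots,0,a)$); $c_k$ is the abscissa at which the curve $\lambda=c+2a\cos(k\varphi)$ meets $\lambda=\lambda_-(c)$ (if $a>0$) or $\lambda=\lambda_+(c)$ (if $a<0$). *)

From Stdlib Require Import Reals Lra Lia.
Open Scope R_scope.

Definition lam_plus (n : nat) (a c : R) : R :=
  (2*a - (INR n - 1)*c + sqrt ((2*a + (INR n + 1)*c)^2 + 4*INR n)) / 2.
Definition lam_minus (n : nat) (a c : R) : R :=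
  (2*a - (INR n - 1)*c - sqrt ((2*a + (INR n + 1)*c)^2 + 4*INR n)) / 2.
Definition lam_lim (a c : R) : R := c - 2*a.

Definition phi (n : nat) : R := 2*PI / INR n.

Definition ck (n : nat) (a : R) (k : nat) : R :=
  let t := cos (INR k * phi n) in
  (4*a^2*t*(1 - t) + INR n) / (2*(INR n + 1)*a*(t - 1)).

(* Solving [lam_minus = lam_lim] (resp. [lam_plus = lam_lim]) means
   [sqrt D = e (6a - (n+1)c)] with [e = 1] (resp. [e = -1]); squaring gives a
   linear equation in [c] with the single root [(8a^2 - n) / (4a(n+1))], and at
   that root [e (6a - (n+1)c) = e (16a^2 + n) / (4a)] is nonnegative exactly
   when [e a > 0].  With [t = cos (k phi)] one has the identity
   [4(n+1) a (c_cross - c_k) = (1+t)(8a^2 + n / (1-t))], and [t] lies in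
   [[-1, 1)] because [0 < k phi <= PI] for [1 <= k <= n/2]. *)

From Stdlib Require Import Reals Lra Lia.
Open Scope R_scope.

Definition crossing (N a : R) : R := (8*a^2 - N) / (4*a*(N + 1)).

Lemma sqrt_eq_iff (x y : R) : 0 <= x -> (sqrt x = y <-> 0 <= y /\ y^2 = x).
Proof.
  intros Hx; split.
  - intros <-; split; [apply sqrt_pos | apply pow2_sqrt; lra].
  - intros [Hy <-]; apply sqrt_pow2; lra.
Qed.

Lemma square_eq_disc_iff (N a c : R) : 0 < N -> a <> 0 ->
  ((6*a - (N + 1)*c)^2 = (2*a + (N + 1)*c)^2 + 4*N <-> c = crossing N a).
Proof.
  intros HN Ha; unfold crossing; split.
  - intros H.
    assert (Hlin : 16*a*(N + 1)*c = 32*a^2 - 4*N) by nra.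
    apply Rmult_eq_reg_l with (4*a*(N + 1)).
    + field_simplify; nra.
    + apply Rmult_integral_contrapositive; split;
        [apply Rmult_integral_contrapositive; split |]; lra.
  - intros ->; field; lra.
Qed.

Lemma six_a_sub_crossing (N a : R) : 0 < N -> a <> 0 ->
  6*a - (N + 1) * crossing N a = (16*a^2 + N) / (4*a).
Proof. intros HN Ha; unfold crossing; field; lra. Qed.

Lemma sqrt_disc_eq_iff (N a c e : R) : 0 < N -> e^2 = 1 -> 0 < e*a ->
  (sqrt ((2*a + (N + 1)*c)^2 + 4*N) = e*(6*a - (N + 1)*c) <-> c = crossing N a).
Proof.
  intros HN He Hea.
  assert (Ha : a <> 0) by (intros ->; lra).
  rewrite sqrt_eq_iff by (pose proof (pow2_ge_0 (2*a + (N + 1)*c)); lra).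
  replace ((e*(6*a - (N + 1)*c))^2) with ((6*a - (N + 1)*c)^2)
    by (replace ((e*(6*a - (N + 1)*c))^2) with (e^2 * (6*a - (N + 1)*c)^2) by ring;
        rewrite He; ring).
  rewrite square_eq_disc_iff by assumption.
  split; [tauto |].
  intros Hc; split; [| exact Hc].
  rewrite Hc, six_a_sub_crossing by assumption.
  replace (e * ((16*a^2 + N) / (4*a))) with ((e*a) * (16*a^2 + N) / (4*a^2))
    by (field; exact Ha).
  apply Rmult_le_pos; [nra |].
  left; apply Rinv_0_lt_compat; nra.
Qed.

Lemma lam_minus_eq_lim_iff (n : nat) (a c : R) : (0 < n)%nat -> 0 < a ->
  lam_minus n a c = lam_lim a c <-> c = crossing (INR n) a.
Proof.
  intros Hn Ha.
  assert (HN : 0 < INR n) by (apply lt_0_INR; exact Hn).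
  rewrite <- (sqrt_disc_eq_iff (INR n) a c 1) by lra.
  unfold lam_minus, lam_lim; lra.
Qed.

Lemma lam_plus_eq_lim_iff (n : nat) (a c : R) : (0 < n)%nat -> a < 0 ->
  lam_plus n a c = lam_lim a c <-> c = crossing (INR n) a.
Proof.
  intros Hn Ha.
  assert (HN : 0 < INR n) by (apply lt_0_INR; exact Hn).
  rewrite <- (sqrt_disc_eq_iff (INR n) a c (-1)) by lra.
  unfold lam_plus, lam_lim; lra.
Qed.

Lemma mul_crossing_sub_ck_formula_nonneg (N a t : R) : 0 < N -> a <> 0 -> -1 <= t < 1 ->
  0 <= a * (crossing N a - (4*a^2*t*(1 - t) + N) / (2*(N + 1)*a*(t - 1))).
Proof.
  intros HN Ha Ht; unfold crossing.
  replace (a * _) with ((1 + t) * (8*a^2 + N / (1 - t)) / (4*(N + 1)))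
    by (field; repeat split; lra).
  assert (0 < N / (1 - t)) by (apply Rdiv_lt_0_compat; lra).
  unfold Rdiv; apply Rmult_le_pos; [nra |].
  left; apply Rinv_0_lt_compat; lra.
Qed.

Lemma mult_phi_in_0_PI (n k : nat) : (1 <= k <= n / 2)%nat ->
  0 < INR k * phi n <= PI.
Proof.
  intros Hk.
  assert (H2k : (2*k <= n)%nat) by (pose proof (Nat.Div0.mul_div_le n 2); lia).
  assert (HN : 0 < INR n) by (apply lt_0_INR; lia).
  assert (Hk1 : 1 <= INR k) by (apply (le_INR 1); lia).
  assert (Hkn : 2 * INR k <= INR n) by (rewrite <- (mult_INR 2); apply le_INR; exact H2k).
  pose proof PI_RGT_0.
  unfold phi.
  replace (INR k * (2*PI / INR n)) with (PI * (2 * INR k / INR n)) by (field; lra).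
  assert (0 < 2 * INR k / INR n <= 1).
  { split; [apply Rdiv_lt_0_compat; lra |].
    apply Rmult_le_reg_r with (INR n); [lra |].
    unfold Rdiv; rewrite Rmult_assoc, Rinv_l by lra; lra. }
  split; nra.
Qed.

Lemma cos_mult_phi_range (n k : nat) : (1 <= k <= n / 2)%nat ->
  -1 <= cos (INR k * phi n) < 1.
Proof.
  intros Hk.
  pose proof (mult_phi_in_0_PI n k Hk) as Hx.
  pose proof PI_RGT_0.
  split; [apply COS_bound |].
  rewrite <- cos_0; apply cos_decreasing_1; lra.
Qed.

Lemma mul_crossing_sub_ck_nonneg (n : nat) (a : R) (k : nat) :
  a <> 0 -> (1 <= k <= n / 2)%nat -> 0 <= a * (crossing (INR n) a - ck n a k).
Proof.
  intros Ha Hk.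
  apply mul_crossing_sub_ck_formula_nonneg; [| exact Ha | exact (cos_mult_phi_range n k Hk)].
  apply lt_0_INR; pose proof (Nat.Div0.mul_div_le n 2); lia.
Qed.

Theorem corollary3 (n : nat) (a : R) :
  (2 < n)%nat -> a <> 0 ->
  (0 < a ->
     exists cm : R,
       (forall c : R, lam_minus n a c = lam_lim a c <-> c = cm) /\
       (forall k : nat, (1 <= k <= n / 2)%nat -> ck n a k <= cm)) /\
  (a < 0 ->
     exists cp : R,
       (forall c : R, lam_plus n a c = lam_lim a c <-> c = cp) /\
       (forall k : nat, (1 <= k <= n / 2)%nat -> cp <= ck n a k)).
Proof.
  intros Hn Ha.
  assert (Hn0 : (0 < n)%nat) by lia.
  split; intros Hsa; exists (crossing (INR n) a); split.
  - intros c; exact (lam_minus_eq_lim_iff n a c Hn0 Hsa).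
  - intros k Hk; pose proof (mul_crossing_sub_ck_nonneg n a k Ha Hk); nra.
  - intros c; exact (lam_plus_eq_lim_iff n a c Hn0 Hsa).
  - intros k Hk; pose proof (mul_crossing_sub_ck_nonneg n a k Ha Hk); nra.
Qed.
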